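(* Let $\mathfrak M\models S_{\overline\alpha}^\forall$ and $\mathfrak A,\mathfrak B\in K_{\overline\alpha}$ with $\mathfrak B\cap\mathfrak M=\mathfrak A$ (so $\mathfrak A$ is a common substructure of $\mathfrak M$ and $\mathfrak B$), and let $\mathfrak N=\mathfrak M\oplus_{\mathfrak A}\mathfrak B$. (1) If $\mathfrak A\le\mathfrak B$ or $\mathfrak A\le\mathfrak M$, then $\mathfrak N\models S_{\overline\alpha}^\forall$. (2) If $\mathfrak A\le\mathfrak B$, then $\mathfrak N$ preserves closures for $\mathfrak M$. (3) If $\mathfrak A\le\mathfrak M$, then $\mathfrak B\le\mathfrak N$. (4) If ($\mathfrak A\le\mathfrak B$ or $\mathfrak A\le\mathfrak M$) and $\mathfrak M$ has finite closures, then $\mathfrak N$ has finite closures.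
   Context: Fix a finite relational language $L$ in which every relation symbol has arity at least $2$. $K_L$ is the class of all finite $L$-structures (including the empty one) in which every relation symbol is interpreted symmetrically and irreflexively. Fix $\overline\alpha:L\to(0,1]$, writing $\overline\alpha_E=\overline\alpha(E)$, such that it is not the case that all symbols of $L$ are binary and $\overline\alpha_E=1$ for all $E$. For $\mathfrak A\in K_L$ let $N_E(\mathfrak A)$ be the number of subsets of $A$ on which $E$ holds and $\delta(\mathfrak A)=|A|-\sum_{E}\overline\alpha_E N_E(\mathfrak A)$; subsets of a structure are identified with induced substructures. $K_{\overline\alpha}=\{\mathfrak A\in K_L:\delta(\mathfrak A')\ge0\text{ for all substructures }\mathfrak A'\subseteq\mathfrak A\}$. For $\mathfrak A\subseteq\mathfrak B$ in $K_L$, $\mathfrak A\le\mathfrak B$ means $\delta(\mathfrak A)\le\delta(\mathfrak A')$ for all $\mathfrak A\subseteq\mathfrak A'\subseteq\mathfrak B$; for finite $\mathfrak A\subseteq\mathfrak X$ with $\mathfrak X$ arbitrary, $\mathfrak A\le\mathfrak X$ means $\mathfrak A\le\mathfrak C$ for all finite $\mathfrak A\subseteq\mathfrak C\subseteq\mathfrak X$. $(\mathfrak A,\mathfrak B)$ is a minimal pair if $\mathfrak A\subseteq\mathfrak B$, $\mathfrak A\le\mathfrak C$ for all $\mathfrak A\subseteq\mathfrak C\subsetneq\mathfrak B$, but $\mathfrak A\not\le\mathfrak B$. A subset $X$ of a structure $\mathfrak Z$ is closed in $\mathfrak Z$ if for every finite $A\subseteq X$ and every minimal pair $(A,B)$ with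 $B\subseteq Z$, $B\subseteq X$. $S_{\overline\alpha}$ is the theory whose models are those structures in which every finite substructure lies in $K_{\overline\alpha}$ and, for all $\mathfrak A\le\mathfrak B$ in $K_{\overline\alpha}$, every embedding of $\mathfrak A$ extends to an embedding of $\mathfrak B$; $S_{\overline\alpha}^\forall$ is the set of universal sentences of $S_{\overline\alpha}$ (its models are the $L$-structures all of whose finite substructures lie in $K_{\overline\alpha}$). The free join $\mathfrak M\oplus_{\mathfrak A}\mathfrak B$ is the structure with universe $M\cup B$ whose relations are exactly $E^{\mathfrak M}\cup E^{\mathfrak B}$ for each $E\in L$. For $\mathfrak M\subseteq\mathfrak N$, $\mathfrak N$ preserves closures for $\mathfrak M$ if every $X\subseteq M$ closed in $\mathfrak M$ is closed in $\mathfrak N$. A structure has finite closures if each of its finite subsets is contained in a finite subset strong in the structure. *)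

From HB Require Import structures.
From mathcomp Require Import all_boot all_order all_algebra.
From mathcomp Require Import finmap.
From mathcomp Require Import reals.
Set Implicit Arguments. Unset Strict Implicit. Unset Printing Implicit Defensive.
Import Order.TTheory GRing.Theory Num.Theory.
Local Open Scope fset_scope.
Local Open Scope ring_scope.

(* A symmetric irreflexive relation symbol E is represented, as in the
   paper, by the set of (ar E)-element subsets of the universe on which E holds. *)
Record Lstr (L : Type) (U : choiceType) := LStr { dom : U -> Prop ; rel : L -> {fset U} -> bool }.

Section Defs.
Variables (L : finType) (U : choiceType) (R : realType).

Definition fin_str (F : {fset U}) (r : L -> {fset U} -> bool) : Lstr L U :=
  LStr (fun x => x \in F) r.

Definition wf (ar : L -> nat) (S : Lstr L U) : Prop :=
  forall E s, rel S E s -> #|` s| = ar E /\ (forall x, x \in s -> dom S x).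

Definition fsub_dom (F : {fset U}) (S : Lstr L U) : Prop :=
  forall x, x \in F -> dom S x.

Definition is_substr (A S : Lstr L U) : Prop :=
  (forall x, dom A x -> dom S x) /\
  (forall E s, (forall x, x \in s -> dom A x) -> rel A E s = rel S E s).

Definition join (M B : Lstr L U) : Lstr L U :=
  LStr (fun x => dom M x \/ dom B x) (fun E s => rel M E s || rel B E s).

Variable alpha : L -> R.

Definition NE (r : L -> {fset U} -> bool) (E : L) (F : {fset U}) : nat :=
  #|` [fset s in fpowerset F | r E s]|.

Definition delta (r : L -> {fset U} -> bool) (F : {fset U}) : R :=
  (#|` F|)%:R - \sum_(E : L) alpha E * (NE r E F)%:R.

Definition inK (r : L -> {fset U} -> bool) (F : {fset U}) : Prop :=
  forall F', F' `<=` F -> 0 <= delta r F'.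

Definition models_Sforall (S : Lstr L U) : Prop :=
  forall F, fsub_dom F S -> inK (rel S) F.

Definition le_in (r : L -> {fset U} -> bool) (A C : {fset U}) : Prop :=
  A `<=` C /\ forall C', A `<=` C' -> C' `<=` C -> delta r A <= delta r C'.

Definition strong (S : Lstr L U) (A : {fset U}) : Prop :=
  forall C, A `<=` C -> fsub_dom C S -> le_in (rel S) A C.

Definition minpair (r : L -> {fset U} -> bool) (A B : {fset U}) : Prop :=
  A `<=` B /\ (forall C, A `<=` C -> C `<` B -> le_in r A C) /\ ~ le_in r A B.

Definition closed (Z : Lstr L U) (X : U -> Prop) : Prop :=
  forall A B : {fset U}, (forall x, x \in A -> X x) -> fsub_dom B Z ->
    minpair (rel Z) A B -> forall x, x \in B -> X x.

Definition preserves_closures (M N : Lstr L U) : Prop :=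
  forall X : U -> Prop, (forall x, X x -> dom M x) -> closed M X -> closed N X.

Definition finite_closures (S : Lstr L U) : Prop :=
  forall F, fsub_dom F S -> exists G, [/\ F `<=` G, fsub_dom G S & strong S G].

End Defs.

(* For every finite F inside N = M (+)_A B, counting points and relations of the free
   join gives  delta_N(F) + delta_A(F & A) = delta_M(F & M) + delta_B(F & B).
   By submodularity of delta, A <= B yields delta_A(F & A) <= delta_B(F & B) and
   A <= M yields delta_A(F & A) <= delta_M(F & M), so delta_N(F) dominates
   delta_M(F & M), resp. delta_B(F & B); this gives (1) and (2).  Above B the identity
   makes delta_N(F) - delta_M(F & M) constant, so G u B is strong in N whenever
   A <= G is strong in M: G = A gives (3), and a finite closure G of (F & M) u A
   gives (4), which therefore needs no strongness of A. *)

From Pilot Require Import Defs.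
From HB Require Import structures.
From mathcomp Require Import all_boot all_order all_algebra.
From mathcomp Require Import finmap.
From mathcomp Require Import reals.
From mathcomp Require Import lra.
Set Implicit Arguments.
Unset Strict Implicit.
Unset Printing Implicit Defensive.
Import Order.TTheory GRing.Theory Num.Theory.
Local Open Scope fset_scope.
Local Open Scope ring_scope.

Section Predimension.
Variables (L : finType) (U : choiceType) (R : realType) (alpha : L -> R).
Implicit Types (r : L -> {fset U} -> bool) (S : Lstr L U) (A B C F X Y : {fset U}).

Lemma in_NE_set r E F s :
  (s \in [fset s in fpowerset F | r E s]) = (s `<=` F) && r E s.
Proof. by rewrite !inE fpowersetE. Qed.

Lemma eq_delta r1 r2 F : (forall E s, s `<=` F -> r1 E s = r2 E s) ->
  delta alpha r1 F = delta alpha r2 F.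
Proof.
move=> r12; congr (_ - _); apply: eq_bigr => E _; rewrite /NE.
suff -> : [fset s in fpowerset F | r1 E s] = [fset s in fpowerset F | r2 E s] by [].
by apply/fsetP => s; rewrite !in_NE_set; case sF: (s `<=` F) => //=; apply: r12.
Qed.

Lemma substr_rel (rA : L -> {fset U} -> bool) FA S : is_substr (fin_str FA rA) S ->
  forall E s, s `<=` FA -> rA E s = Defs.rel S E s.
Proof. by move=> [_ AS] E s /fsubsetP sFA; apply: AS. Qed.

Lemma delta_substr (rA : L -> {fset U} -> bool) FA S F :
  is_substr (fin_str FA rA) S -> F `<=` FA -> delta alpha rA F = delta alpha (Defs.rel S) F.
Proof.
move=> AS FFA; apply: eq_delta => E s sF; apply: (substr_rel AS).
exact: fsubset_trans sF FFA.
Qed.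

Lemma NE_submod r E X Y : (NE r E X + NE r E Y <= NE r E (X `|` Y) + NE r E (X `&` Y))%N.
Proof.
rewrite /NE; set SX := [fset s in fpowerset X | r E s].
set SY := [fset s in fpowerset Y | r E s].
have -> : [fset s in fpowerset (X `&` Y) | r E s] = SX `&` SY.
  apply/fsetP => s; rewrite in_fsetI !in_NE_set fsubsetI.
  by case: (r E s); rewrite ?andbT ?andbF.
rewrite -cardfsUI leq_add2r; apply/fsubset_leq_card/fsubsetP => s.
rewrite inE !in_NE_set => /orP[/andP[sX ->] | /andP[sY ->]]; rewrite andbT.
- exact: fsubset_trans sX (fsubsetUl _ _).
- exact: fsubset_trans sY (fsubsetUr _ _).
Qed.

Lemma le_in_delta r A C : le_in alpha r A C -> delta alpha r A <= delta alpha r C.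
Proof. by move=> [AC leAC]; apply: leAC. Qed.

Lemma minpair_proper_delta r A B C : minpair alpha r A B -> A `<=` C -> C `<` B ->
  delta alpha r A <= delta alpha r C.
Proof. by move=> [_ [minAB _]] AC CB; apply/le_in_delta/minAB. Qed.

Lemma minpair_delta_lt r A B : minpair alpha r A B -> delta alpha r B < delta alpha r A.
Proof.
move=> mAB; rewrite ltNge; apply/negP => leAB; case: (mAB) => AB [_ []].
split=> // C AC CB; have [-> // | neCB] := eqVneq C B.
by apply: minpair_proper_delta mAB AC _; rewrite fproperEneq neCB.
Qed.

Lemma minpair_eq r1 r2 A B : (forall E s, s `<=` B -> r1 E s = r2 E s) ->
  minpair alpha r1 A B -> minpair alpha r2 A B.
Proof.
move=> r12.
have le_in_eq C : C `<=` B -> le_in alpha r1 A C <-> le_in alpha r2 A C.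
  move=> CB; have dC C' : C' `<=` C -> delta alpha r1 C' = delta alpha r2 C'.
    move=> C'C; apply: eq_delta => E s sC'; apply: r12.
    exact: fsubset_trans sC' (fsubset_trans C'C CB).
  split=> -[AC leAC]; split=> // C' AC' C'C; move: (leAC C' AC' C'C).
    by rewrite !dC // (fsubset_trans AC').
  by rewrite !dC // (fsubset_trans AC').
move=> [AB [minAB notAB]]; split=> //; split.
- by move=> C AC CB; apply/le_in_eq; [exact: fproper_sub | exact: minAB].
- by move/(le_in_eq B (fsubset_refl B)).
Qed.

Lemma strongP S A : strong alpha S A <->
  (forall C, A `<=` C -> fsub_dom C S ->
     delta alpha (Defs.rel S) A <= delta alpha (Defs.rel S) C).
Proof.
split=> [stA C AC CS | leA C AC CS]; first exact/le_in_delta/stA.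
split=> // C' AC' C'C; apply: leA => // x xC'; exact/CS/(fsubsetP C'C).
Qed.

Hypothesis alpha_ge0 : forall E, 0 <= alpha E.

Lemma delta_submod r X Y :
  delta alpha r (X `|` Y) + delta alpha r (X `&` Y) <= delta alpha r X + delta alpha r Y.
Proof.
rewrite /delta addrACA [leRHS]addrACA -!natrD cardfsUI lerD2l -!opprD lerN2.
rewrite -!big_split /=; apply: ler_sum => E _; rewrite -!mulrDr ler_wpM2l //.
by rewrite -!natrD ler_nat NE_submod.
Qed.

Lemma strong_delta_meet S A X : strong alpha S A -> fsub_dom A S -> fsub_dom X S ->
  delta alpha (Defs.rel S) (X `&` A) <= delta alpha (Defs.rel S) X.
Proof.
move=> /strongP stA AS XS.
have XAS : fsub_dom (X `|` A) S by move=> x; rewrite in_fsetU => /orP[/XS|/AS].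
have := stA _ (fsubsetUr X A) XAS; have := delta_submod (Defs.rel S) X A; lra.
Qed.

Section FreeJoin.
Variables (ar : L -> nat) (M : Lstr L U) (FA FB : {fset U}) (rA rB : L -> {fset U} -> bool).
Local Notation B := (fin_str FB rB).
Local Notation N := (join M B).
Hypotheses (wfM : wf ar M) (wfB : wf ar B).
Hypotheses (AM : is_substr (fin_str FA rA) M) (AB : is_substr (fin_str FA rA) B).
Hypothesis FA_def : forall x, x \in FA <-> x \in FB /\ dom M x.

(* For [F] inside [N] this is the finite set [F] meets [M] in; membership in [dom M]
   itself is not decidable. *)
Definition mpart F := F `\` (FB `\` FA).

Lemma FA_sub_FB : FA `<=` FB.
Proof. by apply/fsubsetP => x /FA_def[]. Qed.

Lemma in_mpart F x : (x \in mpart F) = (x \in F) && ((x \in FB) ==> (x \in FA)).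
Proof. by rewrite !in_fsetD; case: (x \in F) (x \in FB) (x \in FA) => [] [] []. Qed.

Lemma mpart_sub F : mpart F `<=` F.
Proof. exact: fsubsetDl. Qed.

Lemma sub_mpart G F : fsub_dom G M -> G `<=` F -> G `<=` mpart F.
Proof.
move=> GM /fsubsetP GF; apply/fsubsetP => x xG; rewrite in_mpart GF //=.
by apply/implyP => xB; apply/FA_def; split; last exact: GM.
Qed.

Lemma mpart_dom F : fsub_dom F N -> fsub_dom (mpart F) M.
Proof.
move=> FN x; rewrite in_mpart => /andP[/FN[] // xB /implyP/(_ xB)].
by case/FA_def.
Qed.

Lemma mpartU F : mpart F `|` (F `&` FB) = F.
Proof.
apply/fsetP => x; rewrite in_fsetU in_fsetI in_mpart.
by case: (x \in F) (x \in FB) (x \in FA) => [] [] [].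
Qed.

Lemma mpartI F : mpart F `&` (F `&` FB) = F `&` FA.
Proof.
apply/fsetP => x; rewrite !in_fsetI in_mpart.
have /implyP := fsubsetP FA_sub_FB x.
by case: (x \in F) (x \in FB) (x \in FA) => [] [] [].
Qed.

Lemma mpartIFA F : mpart F `&` FA = F `&` FA.
Proof.
apply/fsetP => x; rewrite !in_fsetI in_mpart.
by case: (x \in F) (x \in FB) (x \in FA) => [] [] [].
Qed.

Lemma rel_join_M D E s : fsub_dom D M -> s `<=` D -> Defs.rel N E s = Defs.rel M E s.
Proof.
move=> DM sD /=; case rBs: (rB E s); rewrite ?orbF ?orbT //.
have sFA : s `<=` FA.
  apply/fsubsetP => x xs; apply/FA_def; split; first exact: (wfB rBs).2 x xs.
  exact/DM/(fsubsetP sD).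
by rewrite -(substr_rel AM) // (substr_rel AB) //= rBs.
Qed.

Lemma NE_join E F : (NE (Defs.rel N) E F + NE rA E (F `&` FA) =
  NE (Defs.rel M) E (mpart F) + NE rB E (F `&` FB))%N.
Proof.
rewrite /NE -[RHS]cardfsUI; congr (_ + _)%N; congr (#|` _|); apply/fsetP => s.
- rewrite in_fsetU !in_NE_set /=; apply/andP/orP.
    move=> [sF /orP[rMs | rBs]]; [left | right]; rewrite ?rMs ?rBs andbT.
      by apply: sub_mpart sF => x; apply: (wfM rMs).2.
    by rewrite fsubsetI sF; apply/fsubsetP => x; apply: (wfB rBs).2.
  move=> [/andP[sF ->] | /andP[sF ->]]; rewrite ?orbT; split=> //.
    exact: fsubset_trans sF (mpart_sub F).
  exact: fsubset_trans sF (fsubsetIl _ _).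
- rewrite in_fsetI !in_NE_set andbACA -fsubsetI mpartI.
  case sFA: (s `<=` F `&` FA) => //=.
  have sA : s `<=` FA := fsubset_trans sFA (fsubsetIr _ _).
  by rewrite -(substr_rel AM) // -[rB E s](substr_rel AB) // andbb.
Qed.

Lemma delta_join F : delta alpha (Defs.rel N) F + delta alpha rA (F `&` FA) =
  delta alpha (Defs.rel M) (mpart F) + delta alpha rB (F `&` FB).
Proof.
have card_split : (#|` mpart F| + #|` F `&` FB|)%N = (#|` F| + #|` F `&` FA|)%N.
  by rewrite -cardfsUI mpartU mpartI.
rewrite /delta addrACA [RHS]addrACA -!natrD card_split; congr (_ + _).
rewrite -!opprD -!big_split; congr (- _); apply: eq_bigr => E _ /=.
by rewrite -!mulrDr -!natrD NE_join.
Qed.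

Lemma delta_join_sup F : FB `<=` F ->
  delta alpha (Defs.rel N) F + delta alpha rA FA =
  delta alpha (Defs.rel M) (mpart F) + delta alpha rB FB.
Proof.
move=> FBF; have FAF := fsubset_trans FA_sub_FB FBF.
by have := delta_join F; rewrite (fsetIidPr FAF) (fsetIidPr FBF).
Qed.

Lemma delta_mpart_le_join F : strong alpha B FA ->
  delta alpha (Defs.rel M) (mpart F) <= delta alpha (Defs.rel N) F.
Proof.
move=> stB; have FAB : fsub_dom FA B by move=> x /(fsubsetP FA_sub_FB).
have FBB : fsub_dom (F `&` FB) B by move=> x; rewrite in_fsetI => /andP[].
have := strong_delta_meet stB FAB FBB.
rewrite -fsetIA (fsetIidPr FA_sub_FB) -(delta_substr AB) ?fsubsetIr //.
have := delta_join F; lra.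
Qed.

Lemma delta_FB_le_join F : strong alpha M FA -> fsub_dom F N ->
  delta alpha rB (F `&` FB) <= delta alpha (Defs.rel N) F.
Proof.
move=> stM FN; have := strong_delta_meet stM AM.1 (mpart_dom FN).
rewrite mpartIFA -(delta_substr AM) ?fsubsetIr //.
have := delta_join F; lra.
Qed.

Lemma join_models_Sforall : models_Sforall alpha M -> inK alpha rB FB ->
  strong alpha B FA \/ strong alpha M FA -> models_Sforall alpha N.
Proof.
move=> KM KB stA F FN F' F'F.
have F'N : fsub_dom F' N by move=> x /(fsubsetP F'F)/FN.
case: stA => [stB | stM].
- apply: le_trans (delta_mpart_le_join F' stB).
  exact: KM (mpart_dom F'N) _ (fsubset_refl _).
- apply: le_trans (delta_FB_le_join stM F'N).
  exact: KB _ (fsubsetIr _ _).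
Qed.

(* A minimal pair of [N] over a base inside [M] cannot leave [M]: otherwise its
   [M]-part would be an intermediate set of no smaller predimension. *)
Lemma join_preserves_closures : strong alpha B FA -> preserves_closures alpha M N.
Proof.
move=> stB X XM clX A' B' A'X B'N mAB x xB'.
have A'M : fsub_dom A' M by move=> y /A'X/XM.
have A'D : A' `<=` mpart B' := sub_mpart A'M mAB.1.
have DM := mpart_dom B'N.
have [B'D | B'nD] := boolP (B' `<=` mpart B').
  have B'M : fsub_dom B' M by move=> y /(fsubsetP B'D)/DM.
  apply: (clX A' B') xB' => //; apply: minpair_eq mAB => E s.
  exact: rel_join_M B'M.
have DB' : mpart B' `<` B' by rewrite fproperE mpart_sub.
have dD : delta alpha (Defs.rel N) (mpart B') = delta alpha (Defs.rel M) (mpart B').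
  by apply: eq_delta => E s; apply: rel_join_M.
have := minpair_proper_delta mAB A'D DB'.
have := minpair_delta_lt mAB; have := delta_mpart_le_join B' stB; lra.
Qed.

Lemma strong_join G : strong alpha M G -> FA `<=` G -> fsub_dom G M ->
  strong alpha N (G `|` FB).
Proof.
move=> /strongP stG FAG GM; apply/strongP => C GBC CN.
have mpartG : mpart (G `|` FB) = G.
  apply/eqP; rewrite eqEfsubset sub_mpart ?fsubsetUl // andbT.
  apply/fsubsetP => x; rewrite in_mpart in_fsetU => /andP[/orP[-> // | xB]].
  by move/implyP/(_ xB)/(fsubsetP FAG).
have GD : G `<=` mpart C := sub_mpart GM (fsubset_trans (fsubsetUl G FB) GBC).
have := stG _ GD (mpart_dom CN).
have := delta_join_sup (fsubset_trans (fsubsetUr G FB) GBC).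
have := delta_join_sup (fsubsetUr G FB); rewrite mpartG; lra.
Qed.

Lemma join_finite_closures : finite_closures alpha M -> finite_closures alpha N.
Proof.
move=> fcM F FN.
have FAM : fsub_dom (mpart F `|` FA) M.
  by move=> x; rewrite in_fsetU => /orP[/(mpart_dom FN) | /AM.1].
have [G [FG GM stG]] := fcM _ FAM.
exists (G `|` FB); split.
- rewrite -(mpartU F); apply: fsetUSS (fsubsetIr _ _).
  exact: fsubset_trans (fsubsetUl _ FA) FG.
- by move=> x; rewrite in_fsetU => /orP[/GM | ]; [left | right].
- by apply: strong_join stG _ GM; apply: fsubset_trans (fsubsetUr _ _) FG.
Qed.

End FreeJoin.
End Predimension.

Theorem lemma5p11 (L : finType) (U : choiceType) (R : realType)
  (ar : L -> nat) (alpha : L -> R)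
  (Har : forall E, (2 <= ar E)%N)
  (Halpha : forall E, 0 < alpha E <= 1)
  (Hnot : ~ (forall E, ar E = 2%N /\ alpha E = 1))
  (M : Lstr L U) (FA FB : {fset U}) (rA rB : L -> {fset U} -> bool) :
  let A := fin_str FA rA in
  let B := fin_str FB rB in
  let N := join M B in
  wf ar M -> wf ar A -> wf ar B ->
  models_Sforall alpha M ->
  inK alpha rA FA -> inK alpha rB FB ->
  is_substr A M -> is_substr A B ->
  (forall x, x \in FA <-> (x \in FB /\ dom M x)) ->
  [/\ (strong alpha B FA \/ strong alpha M FA) -> models_Sforall alpha N,
      strong alpha B FA -> preserves_closures alpha M N,
      strong alpha M FA -> strong alpha N FB &
      (strong alpha B FA \/ strong alpha M FA) ->
        finite_closures alpha M -> finite_closures alpha N].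
Proof.
move=> A B N; rewrite {}/N {}/B {}/A => wfM _ wfB KM _ KB AM AB FA_def.
have alpha_ge0 E : 0 <= alpha E by case/andP: (Halpha E) => /ltW.
split.
- exact: (join_models_Sforall alpha_ge0 wfM wfB AM AB FA_def KM KB).
- exact: (join_preserves_closures alpha_ge0 wfM wfB AM AB FA_def).
- move=> stM; have := strong_join wfM wfB AM AB FA_def stM (fsubset_refl FA) AM.1.
  by rewrite (fsetUidPr _ _ (FA_sub_FB FA_def)).
- move=> _; exact: (join_finite_closures wfM wfB AM AB FA_def).
Qed.
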